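(* Let $\varphi=\mathrm{vec}(A)$, $\varphi_0=\mathrm{vec}(A_0)$ with $A,A_0\in\mathbb{R}^{(p-r)\times r}$, $\|A\|_2<1$, $\|A_0\|_2<1$. If $$\|\sin\Theta\{U(\varphi),U(\varphi_0)\}\|_F\le\frac{(1-\|A_0\|_2^2)^2}{8(1+\|A_0\|_2^2)^2},$$ then $$\|U(\varphi)-U(\varphi_0)\|_F\le4\Big\{1+\frac{32\sqrt2(1+\|A_0\|_2^2)^2}{(1-\|A_0\|_2^2)^2}\Big\}\|\sin\Theta\{U(\varphi),U(\varphi_0)\}\|_F .$$ Moreover, for all such $\varphi,\varphi_0$, $\|\sin\Theta\{U(\varphi),U(\varphi_0)\}\|_F\le\sqrt2\,\|U(\varphi)-U(\varphi_0)\|_F$.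
   Context: Fix $1\le r\le p$. For $A\in\mathbb{R}^{(p-r)\times r}$, $\varphi=\mathrm{vec}(A)$, $X_\varphi=\begin{bmatrix}0_{r\times r}&-A^{T}\\ A&0\end{bmatrix}$, $I_{p\times r}=\begin{bmatrix}I_r\\0\end{bmatrix}$, and $U(\varphi)=(I_p+X_\varphi)(I_p-X_\varphi)^{-1}I_{p\times r}\in\mathbb{O}(p,r)$ (Cayley parameterization; $\mathbb{O}(p,r)$ = $p\times r$ matrices with orthonormal columns). For $U,V\in\mathbb{O}(p,r)$ with singular values $\sigma_1\ge\dots\ge\sigma_r$ of $U^TV$, the canonical angles are $\theta_i=\arccos\sigma_i$ and $\|\sin\Theta(U,V)\|_F=(\sum_{i=1}^r\sin^2\theta_i)^{1/2}$. *)

From HB Require Import structures.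
From mathcomp Require Import all_boot all_order all_algebra.
From mathcomp Require Import all_classical all_reals all_analysis.
Set Implicit Arguments. Unset Strict Implicit. Unset Printing Implicit Defensive.
Import Order.TTheory GRing.Theory Num.Theory.
Local Open Scope ring_scope.
Local Open Scope classical_set_scope.

Section Defs.
Variable R : realType.

Definition vnorm n (x : 'cV[R]_n) : R := Num.sqrt (\sum_(i < n) x i 0 ^+ 2).

Definition fnorm m n (M : 'M[R]_(m, n)) : R :=
  Num.sqrt (\sum_(i < m) \sum_(j < n) M i j ^+ 2).

Definition spec_norm m n (A : 'M[R]_(m, n)) : R :=
  sup [set vnorm (A *m x) | x in [set x : 'cV[R]_n | vnorm x = 1]].

(* Cayley parameterization, with p = r + k (k = p - r) *)
Definition Xphi r k (A : 'M[R]_(k, r)) : 'M[R]_(r + k) :=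
  block_mx 0 (- A^T) A 0.

Definition Ipr r k : 'M[R]_(r + k, r) := col_mx 1%:M 0.

Definition Ucay r k (A : 'M[R]_(k, r)) : 'M[R]_(r + k, r) :=
  (1%:M + Xphi A) *m invmx (1%:M - Xphi A) *m Ipr r k.

Definition orthogonal_mx n (P : 'M[R]_n) : Prop := P^T *m P = 1%:M.

Definition is_svals n (M : 'M[R]_n) (s : 'rV[R]_n) : Prop :=
  (forall i, 0 <= s 0 i) /\
  (forall i j : 'I_n, (i <= j)%N -> s 0 j <= s 0 i) /\
  exists P Q : 'M[R]_n, orthogonal_mx P /\ orthogonal_mx Q /\
     M = P *m diag_mx s *m Q^T.

(* ||sin Theta||_F computed from the singular values s of U^T V:
   theta_i = arccos sigma_i *)
Definition sinThetaF n (s : 'rV[R]_n) : R :=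
  Num.sqrt (\sum_(i < n) sin (acos (s 0 i)) ^+ 2).

End Defs.

From HB Require Import structures.
From mathcomp Require Import all_boot all_order all_algebra.
From mathcomp Require Import all_classical all_reals all_analysis.
From mathcomp Require Import ring lra.
Import Order.TTheory GRing.Theory Num.Theory.
Set Implicit Arguments. Unset Strict Implicit. Unset Printing Implicit Defensive.
Local Open Scope ring_scope.

(* Write U = U(A), V = U(A0) and let U^T V = P diag(s) Q^T be the given SVD,
   so that ||sin Theta(U, V)||_F^2 = sum_i (1 - s_i^2).  The proof combines
   three estimates, all in the Frobenius geometry <X, Y> = tr (X^T Y):
   - Procrustes: for the rotation O = P Q^T, |U O - V|^2 = 2 sum_i (1 - s_i)
     <= 2 ||sin Theta||^2; conversely ||sin Theta||^2 <= 2 |U - V|^2.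
   - Cayley structure: U has orthonormal columns and its upper r x r block T
     is symmetric with (I + A^T A) T = I - A^T A, hence
     T >= c I with c = (1 - ||A||_2^2) / (1 + ||A||_2^2).
   - Sylvester step: if T >= 0 and T0 >= c I, pairing the identity
     E^T - E O^T = (O^T - I) T + T0 (O^T - I), E = T O - T0, with O^T - I
     gives c |O - I| <= 2 |E| <= 2 |U O - V|, so that
     |U - V| <= |O - I| + |U O - V| <= (1 + 2 / c) |U O - V|.  The bound obtained,
   (1 + 2 / c) sqrt 2 ||sin Theta||_F, is stronger than the stated one. *)

Section Frobenius.
Variable R : rcfType.

Definition fip m n (X Y : 'M[R]_(m, n)) : R := \sum_i \sum_j X i j * Y i j.
Definition fnm m n (X : 'M[R]_(m, n)) : R := Num.sqrt (fip X X).

Lemma fipC m n (X Y : 'M[R]_(m, n)) : fip X Y = fip Y X.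
Proof. by apply: eq_bigr => i _; apply: eq_bigr => j _; rewrite mulrC. Qed.

Lemma fipDl m n (X Y Z : 'M[R]_(m, n)) : fip (X + Y) Z = fip X Z + fip Y Z.
Proof.
rewrite /fip -big_split; apply: eq_bigr => i _; rewrite -big_split.
by apply: eq_bigr => j _; rewrite !mxE mulrDl.
Qed.

Lemma fipZl m n a (X Y : 'M[R]_(m, n)) : fip (a *: X) Y = a * fip X Y.
Proof.
rewrite /fip mulr_sumr; apply: eq_bigr => i _; rewrite mulr_sumr.
by apply: eq_bigr => j _; rewrite !mxE mulrA.
Qed.

Lemma fipNl m n (X Y : 'M[R]_(m, n)) : fip (- X) Y = - fip X Y.
Proof. by rewrite -scaleN1r fipZl mulN1r. Qed.

Lemma fipBl m n (X Y Z : 'M[R]_(m, n)) : fip (X - Y) Z = fip X Z - fip Y Z.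
Proof. by rewrite fipDl fipNl. Qed.

Lemma fipDr m n (X Y Z : 'M[R]_(m, n)) : fip Z (X + Y) = fip Z X + fip Z Y.
Proof. by rewrite fipC fipDl !(fipC Z). Qed.

Lemma fipZr m n a (X Y : 'M[R]_(m, n)) : fip Y (a *: X) = a * fip Y X.
Proof. by rewrite fipC fipZl fipC. Qed.

Lemma fipNr m n (X Y : 'M[R]_(m, n)) : fip X (- Y) = - fip X Y.
Proof. by rewrite fipC fipNl fipC. Qed.

Lemma fipBr m n (X Y Z : 'M[R]_(m, n)) : fip Z (X - Y) = fip Z X - fip Z Y.
Proof. by rewrite fipDr fipNr. Qed.

Lemma fip_ge0 m n (X : 'M[R]_(m, n)) : 0 <= fip X X.
Proof.
by apply: sumr_ge0 => i _; apply: sumr_ge0 => j _; rewrite -expr2 sqr_ge0.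
Qed.

Lemma fip_eq0 m n (X : 'M[R]_(m, n)) : fip X X = 0 -> X = 0.
Proof.
have sq_ge0 (x : R) : 0 <= x * x by rewrite -expr2 sqr_ge0.
move=> /eqP; rewrite psumr_eq0 => [/allP X0|i _]; last first.
  by apply: sumr_ge0 => j _.
apply/matrixP => i j; rewrite mxE.
have /implyP/(_ isT) := X0 i (mem_index_enum _); rewrite psumr_eq0 // => /allP.
move=> /(_ j (mem_index_enum _)) /implyP /(_ isT).
by rewrite mulf_eq0 orbb => /eqP.
Qed.

Lemma fip_tr m n (X Y : 'M[R]_(m, n)) : fip X Y = \tr (X^T *m Y).
Proof.
rewrite /fip /mxtrace exchange_big; apply: eq_bigr => j _; rewrite !mxE.
by apply: eq_bigr => i _; rewrite mxE.
Qed.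

Lemma fip_trmx m n (X Y : 'M[R]_(m, n)) : fip X^T Y^T = fip X Y.
Proof. by rewrite !fip_tr !trmxK mxtrace_mulC -mxtrace_tr trmx_mul trmxK. Qed.

Lemma fip_adj m n p (A : 'M[R]_(m, n)) (X : 'M[R]_(n, p)) Y :
  fip (A *m X) Y = fip X (A^T *m Y).
Proof. by rewrite !fip_tr trmx_mul mulmxA. Qed.

Lemma fip_orth m n p (U : 'M[R]_(m, n)) (X Y : 'M[R]_(n, p)) :
  U^T *m U = 1%:M -> fip (U *m X) (U *m Y) = fip X Y.
Proof. by move=> hU; rewrite fip_adj mulmxA hU mul1mx. Qed.

Lemma fip_cols m n (X Y : 'M[R]_(m, n)) :
  fip X Y = \sum_j fip (col j X) (col j Y).
Proof.
rewrite /fip exchange_big; apply: eq_bigr => j _; apply: eq_bigr => i _.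
by rewrite big_ord1 !mxE.
Qed.

Lemma cauchy_schwarz2 m n (X Y : 'M[R]_(m, n)) :
  fip X Y ^+ 2 <= fip X X * fip Y Y.
Proof.
have quad t : 0 <= t ^+ 2 * fip X X - 2 * t * fip X Y + fip Y Y.
  have := fip_ge0 (t *: X - Y).
  by rewrite fipBl !fipBr !fipZl !fipZr (fipC Y X); congr (_ <= _); ring.
have [X0|Xn0] := eqVneq (fip X X) 0.
  by rewrite (fip_eq0 X0) -(scale0r (0 : 'M[R]_(m, n))) !fipZl !mul0r expr0n.
have Xpos : 0 < fip X X by rewrite lt_def Xn0 fip_ge0.
have := quad (fip X Y / fip X X).
set a := fip X X; set b := fip Y Y; set c := fip X Y => hq.
have E : a * ((c / a) ^+ 2 * a - 2 * (c / a) * c + b) = a * b - c ^+ 2.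
  by field.
by rewrite -subr_ge0 -E mulr_ge0 // ltW.
Qed.

(* |A x|^2 <= ||A||_F^2 |x|^2, by Cauchy-Schwarz on each row. *)
Lemma fip_mulmx_le k r (A : 'M[R]_(k, r)) (x : 'cV[R]_r) :
  fip (A *m x) (A *m x) <= fip A A * fip x x.
Proof.
rewrite {1}/fip /fip mulr_suml; apply: ler_sum => i _; rewrite big_ord1.
have -> : (A *m x) i 0 = fip (row i A)^T x.
  by rewrite mxE /fip; apply: eq_bigr => j _; rewrite big_ord1 !mxE.
have -> : \sum_j A i j * A i j = fip (row i A)^T (row i A)^T.
  by rewrite /fip; apply: eq_bigr => j _; rewrite big_ord1 !mxE.
by rewrite -expr2 cauchy_schwarz2.
Qed.

Lemma fnm_ge0 m n (X : 'M[R]_(m, n)) : 0 <= fnm X.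
Proof. exact: sqrtr_ge0. Qed.

Lemma fnm_sqr m n (X : 'M[R]_(m, n)) : fnm X ^+ 2 = fip X X.
Proof. by rewrite sqr_sqrtr // fip_ge0. Qed.

Lemma fip_le m n (X Y : 'M[R]_(m, n)) : fip X Y <= fnm X * fnm Y.
Proof.
rewrite -sqrtrM ?fip_ge0 // (le_trans (ler_norm _)) // -sqrtr_sqr.
by rewrite ler_sqrt ?cauchy_schwarz2 // mulr_ge0 ?fip_ge0.
Qed.

Lemma fnm_opp m n (X : 'M[R]_(m, n)) : fnm (- X) = fnm X.
Proof. by rewrite /fnm fipNl fipNr opprK. Qed.

Lemma fipN_le m n (X Y : 'M[R]_(m, n)) : - fip X Y <= fnm X * fnm Y.
Proof. by rewrite -fipNr -(fnm_opp Y) fip_le. Qed.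

Lemma fnm_triangle m n (X Y : 'M[R]_(m, n)) : fnm (X + Y) <= fnm X + fnm Y.
Proof.
rewrite -ler_sqr ?nnegrE ?addr_ge0 ?fnm_ge0 //.
rewrite fnm_sqr fipDl !fipDr (fipC Y X) sqrrD !fnm_sqr.
by have := fip_le X Y; lra.
Qed.

Lemma fnm_orth m n p (U : 'M[R]_(m, n)) (X : 'M[R]_(n, p)) :
  U^T *m U = 1%:M -> fnm (U *m X) = fnm X.
Proof. by move=> hU; rewrite /fnm fip_orth. Qed.

Lemma fnm_usub m k n (X : 'M[R]_(m + k, n)) : fnm (usubmx X) <= fnm X.
Proof.
rewrite ler_sqrt ?fip_ge0 //.
set Y := col_mx (usubmx X) (dsubmx X).
have -> : fip X X = fip Y Y by rewrite /Y vsubmxK.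
rewrite [X in _ <= X]/fip big_split_ord /=.
have up i j : Y (lshift k i) j = usubmx X i j by rewrite col_mxEu.
have down i j : Y (rshift m i) j = dsubmx X i j by rewrite col_mxEd.
under [X in _ <= X + _]eq_bigr do under eq_bigr do rewrite up.
under [X in _ <= _ + X]eq_bigr do under eq_bigr do rewrite down.
by rewrite lerDl fip_ge0.
Qed.

Lemma fnm_trmx m n (X : 'M[R]_(m, n)) : fnm X^T = fnm X.
Proof. by rewrite /fnm fip_trmx. Qed.

End Frobenius.

Section CayleyAlgebra.
Variable R : rcfType.

Lemma op_bound_mx k r p (A : 'M[R]_(k, r)) (b : R) :
  (forall x : 'cV[R]_r, fip (A *m x) (A *m x) <= b * fip x x) ->
  forall X : 'M[R]_(r, p), fip (A *m X) (A *m X) <= b * fip X X.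
Proof.
move=> hA X; rewrite fip_cols (fip_cols X) mulr_sumr; apply: ler_sum => j _.
by rewrite !colE -mulmxA -colE hA.
Qed.

Lemma op_bound_trmx k r p (A : 'M[R]_(k, r)) (a : R) : 0 <= a ->
  (forall X : 'M[R]_(r, p), fip (A *m X) (A *m X) <= a ^+ 2 * fip X X) ->
  forall V : 'M[R]_(k, p), fip (A^T *m V) (A^T *m V) <= a ^+ 2 * fip V V.
Proof.
move=> a_ge0 hA V; set Y := A^T *m V.
have AY_le : fnm (A *m Y) <= a * fnm Y.
  rewrite /fnm -(ger0_norm a_ge0) -sqrtr_sqr -sqrtrM ?sqr_ge0 // ler_sqrt //.
  by rewrite mulr_ge0 ?sqr_ge0 ?fip_ge0.
have Y_sqr : fnm Y ^+ 2 <= fnm V * (a * fnm Y).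
  rewrite fnm_sqr {1}/Y fip_adj trmxK (le_trans (fip_le _ _)) //.
  by rewrite ler_wpM2l ?fnm_ge0.
have Y_le : fnm Y <= a * fnm V.
  have [Y0|Yn0] := eqVneq (fnm Y) 0; first by rewrite Y0 mulr_ge0 ?fnm_ge0.
  have Ypos : 0 < fnm Y by rewrite lt_def Yn0 fnm_ge0.
  by rewrite -(ler_pM2r Ypos) -expr2 (le_trans Y_sqr) // mulrA (mulrC (fnm V)).
by rewrite -!fnm_sqr -exprMn ler_sqr ?nnegrE ?mulr_ge0 ?fnm_ge0.
Qed.

(* I - X is invertible when X is skew-symmetric: (I - X) v = 0 forces
   <v, v X> = 0, i.e. v = 0. *)
Lemma skew_unitmx n (X : 'M[R]_n) : X^T = - X -> 1%:M - X \in unitmx.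
Proof.
move=> skewX; rewrite -row_free_unit; apply: inj_row_free => v hv.
have ev : v = v *m X.
  by apply/eqP; rewrite -subr_eq0 -[v in v - _]mulmx1 -mulmxBr hv.
have skew_form : fip v (v *m X) = - fip v (v *m X).
  rewrite -{1}fip_trmx trmx_mul skewX mulNmx fipNr; congr (- _).
  by rewrite [RHS]fipC -[RHS]fip_trmx trmx_mul fip_adj trmxK.
have vv : fip v v = fip v (v *m X) by rewrite -ev.
by apply: fip_eq0; lra.
Qed.

Lemma cayley_factors_commute n (X : 'M[R]_n) :
  (1%:M - X) *m (1%:M + X) = (1%:M + X) *m (1%:M - X).
Proof.
rewrite mulmxDr mulmxBr !mulmx1 mulmxBl mulmxDl !mul1mx.
by rewrite addrA subrK opprD addrA addrK.
Qed.

Lemma cayley_sum_two n (G T : 'M[R]_n) :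
  (1%:M + G) *m T = 1%:M - G -> (1%:M + G) *m (1%:M + T) = 2%:M.
Proof.
move=> hT; rewrite mulmxDr hT mulmx1 addrACA subrr addr0; apply/matrixP => i j.
by rewrite !mxE; case: (i == j); rewrite /= ?mulr0n ?addr0.
Qed.

Lemma cayley_orthogonal n (X : 'M[R]_n) : X^T = - X ->
  let C := (1%:M + X) *m invmx (1%:M - X) in C^T *m C = 1%:M.
Proof.
move=> skewX C.
have unitB := skew_unitmx skewX.
have unitD : 1%:M + X \in unitmx by rewrite -unitmx_tr linearD /= trmx1 skewX.
have trB : (1%:M - X)^T = 1%:M + X by rewrite linearB /= trmx1 skewX opprK.
have trD : (1%:M + X)^T = 1%:M - X by rewrite linearD /= trmx1 skewX.
rewrite /C trmx_mul trmx_inv trB trD mulmxA -(mulmxA _ (1%:M - X)).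
by rewrite cayley_factors_commute !mulmxA mulVmx // mul1mx mulmxV.
Qed.

(* If G is symmetric and (I + G) T = I - G, then T is symmetric: indeed
   T = (I + G)^-1 (I - G) = 2 (I + G)^-1 - I. *)
Lemma cayley_sym n (G T : 'M[R]_n) : G^T = G ->
  (1%:M + G) *m T = 1%:M - G -> T^T = T.
Proof.
move=> symG hT.
have hTt : T^T *m (1%:M + G) = 1%:M - G.
  by have := congr1 trmx hT; rewrite trmx_mul linearD linearB /= trmx1 symG.
have two := cayley_sum_two hT.
set W := 2^-1 *: (1%:M + T).
have hW : (1%:M + G) *m W = 1%:M.
  by rewrite /W -scalemxAr two scale_scalar_mx mulVf // pnatr_eq0.
have hW' := mulmx1C hW.
have eB : 1%:M - G = 2%:M - (1%:M + G).
  by apply/matrixP => i j; rewrite !mxE; case: (i == j); rewrite /= ?mulr0n; lra.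
have eT : T = W *m (1%:M - G) by rewrite -hT mulmxA hW' mul1mx.
have eTt : T^T = (1%:M - G) *m W by rewrite -hTt -mulmxA hW mulmx1.
rewrite eTt [RHS]eT eB mulmxBl mulmxBr hW hW'.
by rewrite mul_scalar_mx mul_mx_scalar.
Qed.

(* Writing x = (I + G) w with G = A^T A gives
   <x, T x> = |w|^2 - |G w|^2 and |x|^2 = |w|^2 + 2 <w, G w> + |G w|^2,
   while <w, G w> <= a^2 |w|^2 and |G w|^2 <= a^2 <w, G w>. *)
Lemma cayley_block_lb k r p (A : 'M[R]_(k, r)) (a : R) (T : 'M[R]_r) :
  0 <= a ->
  (forall X : 'M[R]_(r, p), fip (A *m X) (A *m X) <= a ^+ 2 * fip X X) ->
  (1%:M + A^T *m A) *m T = 1%:M - A^T *m A ->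
  forall X : 'M[R]_(r, p),
    (1 - a ^+ 2) * fip X X <= (1 + a ^+ 2) * fip X (T *m X).
Proof.
move=> a_ge0 hA hT X; set G := A^T *m A.
have symG : G^T = G by rewrite /G trmx_mul trmxK.
have symT := cayley_sym symG hT.
have hTt : T *m (1%:M + G) = 1%:M - G.
  by have := congr1 trmx hT; rewrite trmx_mul symT linearD linearB /= trmx1 symG.
have two := cayley_sum_two hT.
set w := 2^-1 *: ((1%:M + T) *m X).
have eX : (1%:M + G) *m w = X.
  by rewrite /w -scalemxAr mulmxA two mul_scalar_mx scalerA mulVf ?scale1r //
    pnatr_eq0.
have eTX : T *m X = (1%:M - G) *m w by rewrite -eX mulmxA hTt.
have eD : (1%:M + G) *m w = w + G *m w by rewrite mulmxDl mul1mx.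
have eB : (1%:M - G) *m w = w - G *m w by rewrite mulmxBl mul1mx.
set g := fip w (G *m w).
have eg : g = fip (A *m w) (A *m w) by rewrite /g fip_adj /G mulmxA.
have Gw_le : fip (G *m w) (G *m w) <= a ^+ 2 * g.
  by rewrite eg /G -mulmxA; apply: op_bound_trmx.
have g_le : g <= a ^+ 2 * fip w w by rewrite eg hA.
have ETX : fip X (T *m X) = fip w w - fip (G *m w) (G *m w).
  by rewrite eTX -{1}eX eD eB fipDl !fipBr (fipC (G *m w) w); ring.
have EX : fip X X = fip w w + 2 * g + fip (G *m w) (G *m w).
  by rewrite -eX eD fipDl !fipDr (fipC (G *m w) w) /g; ring.
rewrite ETX EX; lra.
Qed.

End CayleyAlgebra.

Section Perturbation.
Variable R : rcfType.

(* sum_i (1 - s_i^2) = ||sin Theta||_F^2 when the s_i are the cosines of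
   the canonical angles. *)
Definition sinsq_sum n (s : 'rV[R]_n) : R := \sum_i (1 - s 0 i ^+ 2).

(* Diagonal entries of W1^T W2 are at most 1 when W1, W2 have orthonormal
   columns: 2 <w1, w2> <= |w1|^2 + |w2|^2 = 2 column by column. *)
Lemma diag_le1 p r (W1 W2 : 'M[R]_(p, r)) i :
  W1^T *m W1 = 1%:M -> W2^T *m W2 = 1%:M -> (W1^T *m W2) i i <= 1.
Proof.
move=> h1 h2.
have entry (X Y : 'M[R]_(p, r)) : (X^T *m Y) i i = \sum_l X l i * Y l i.
  by rewrite mxE; apply: eq_bigr => l _; rewrite mxE.
have := congr1 (fun M : 'M[R]_r => M i i) h1.
have := congr1 (fun M : 'M[R]_r => M i i) h2.
rewrite /= !entry !mxE eqxx /= => s2 s1.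
have : \sum_l 2 * (W1 l i * W2 l i) <= \sum_l (W1 l i * W1 l i + W2 l i * W2 l i).
  apply: ler_sum => l _; have := sqr_ge0 (W1 l i - W2 l i); nra.
by rewrite -mulr_sumr big_split /= s1 s2; lra.
Qed.

Lemma tr_diag_mul n (s : 'rV[R]_n) (N : 'M[R]_n) :
  \tr (diag_mx s *m N) = \sum_i s 0 i * N i i.
Proof. by apply: eq_bigr => i _; rewrite mul_diag_mx mxE. Qed.

(* Sylvester step: for E = T O - T0 and Z = O^T - I one has
   E^T - E O^T = Z T + T0 Z, and pairing with Z gives
   c |Z|^2 <= <Z, Z T> + <Z, T0 Z> <= 2 |Z| |E| when T >= 0 and T0 >= c I. *)
Lemma sylvester_bound n (T T0 O : 'M[R]_n) (c : R) :
  T^T = T -> T0^T = T0 -> O^T *m O = 1%:M ->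
  (forall X : 'M[R]_n, 0 <= fip X (T *m X)) ->
  (forall X : 'M[R]_n, c * fip X X <= fip X (T0 *m X)) ->
  c * fnm (O - 1%:M) <= 2 * fnm (T *m O - T0).
Proof.
move=> symT symT0 hO T_ge0 T0_lb.
have hOt : O *m O^T = 1%:M := mulmx1C hO.
set E := T *m O - T0; set Z := O^T - 1%:M.
have -> : fnm (O - 1%:M) = fnm Z by rewrite -fnm_trmx linearB /= trmx1.
have sylv : E^T - E *m O^T = Z *m T + T0 *m Z.
  rewrite /E /Z linearB /= trmx_mul symT symT0 mulmxBl -mulmxA hOt mulmx1.
  rewrite mulmxBl mulmxBr mul1mx mulmx1.
  set X1 := O^T *m T; set X2 := T0 *m O^T.
  by apply/matrixP => i j; rewrite !mxE; lra.
have ZT_ge0 : 0 <= fip Z (Z *m T) by rewrite -fip_trmx trmx_mul symT T_ge0.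
have ZT0_ge : c * fip Z Z <= fip Z (T0 *m Z) := T0_lb Z.
have EOt : fnm (E *m O^T) = fnm E.
  by rewrite -fnm_trmx trmx_mul trmxK fnm_orth // fnm_trmx.
have pair_le : fip Z (E^T - E *m O^T) <= 2 * (fnm Z * fnm E).
  rewrite fipBr; have := fip_le Z E^T; have := fipN_le Z (E *m O^T).
  by rewrite EOt fnm_trmx; lra.
have sq_le : c * fnm Z ^+ 2 <= 2 * (fnm Z * fnm E).
  by rewrite fnm_sqr; move: pair_le; rewrite sylv fipDr; lra.
have [Z0|Zn0] := eqVneq (fnm Z) 0; first by rewrite Z0 mulr0 mulr_ge0 ?fnm_ge0.
have Zpos : 0 < fnm Z by rewrite lt_def Zn0 fnm_ge0.
by rewrite -(ler_pM2r Zpos); move: sq_le; rewrite expr2; lra.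
Qed.

(* If U, V have orthonormal columns and symmetric upper blocks T >= 0 and
   T0 >= c I, then for every orthogonal O, U - V = U (I - O) + (U O - V)
   gives |U - V| <= (1 + 2 / c) |U O - V|, since T O - T0 is the upper block
   of U O - V. *)
Lemma frame_dist_le m r (U V : 'M[R]_(r + m, r)) (O : 'M[R]_r) (c : R) :
  0 <= c -> U^T *m U = 1%:M -> O^T *m O = 1%:M ->
  (usubmx U)^T = usubmx U -> (usubmx V)^T = usubmx V ->
  (forall X : 'M[R]_r, 0 <= fip X (usubmx U *m X)) ->
  (forall X : 'M[R]_r, c * fip X X <= fip X (usubmx V *m X)) ->
  c * fnm (U - V) <= (c + 2) * fnm (U *m O - V).
Proof.
move=> c_ge0 hU hO symT symT0 T_ge0 T0_lb.
have top : usubmx (U *m O - V) = usubmx U *m O - usubmx V.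
  by rewrite linearB /= mul_usub_mx.
have rot_le : c * fnm (O - 1%:M) <= 2 * fnm (U *m O - V).
  apply: le_trans (sylvester_bound symT symT0 hO T_ge0 T0_lb) _.
  by rewrite -top ler_wpM2l ?fnm_usub.
have split_le : fnm (U - V) <= fnm (O - 1%:M) + fnm (U *m O - V).
  have -> : U - V = U *m (1%:M - O) + (U *m O - V).
    by rewrite mulmxBr mulmx1 addrA subrK.
  by rewrite (le_trans (fnm_triangle _ _)) // fnm_orth // -opprB fnm_opp.
have := ler_wpM2l c_ge0 split_le; lra.
Qed.

Lemma frame_fip_self p r (W : 'M[R]_(p, r)) : W^T *m W = 1%:M -> fip W W = r%:R.
Proof. by move=> hW; rewrite fip_tr hW mxtrace1. Qed.

Section Procrustes.
Variables (m r : nat) (U V : 'M[R]_(m, r)) (P Q : 'M[R]_r) (s : 'rV[R]_r).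
Hypotheses (hU : U^T *m U = 1%:M) (hV : V^T *m V = 1%:M).
Hypotheses (hP : P^T *m P = 1%:M) (hQ : Q^T *m Q = 1%:M).
Hypotheses (s_ge0 : forall i, 0 <= s 0 i).
Hypothesis hsvd : U^T *m V = P *m diag_mx s *m Q^T.

Lemma svals_le1 i : s 0 i <= 1.
Proof.
have hS : (U *m P)^T *m (V *m Q) = diag_mx s.
  rewrite trmx_mul -mulmxA (mulmxA U^T) hsvd !mulmxA hP mul1mx.
  by rewrite -mulmxA hQ mulmx1.
have -> : s 0 i = diag_mx s i i by rewrite mxE eqxx mulr1n.
have frameM (W : 'M[R]_(m, r)) (O : 'M[R]_r) :
    W^T *m W = 1%:M -> O^T *m O = 1%:M -> (W *m O)^T *m (W *m O) = 1%:M.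
  by move=> hW hO; rewrite trmx_mul -mulmxA (mulmxA W^T) hW mul1mx.
by rewrite -hS diag_le1 ?frameM.
Qed.

(* Lower bound: ||sin Theta||^2 <= 2 ||U - V||^2, from
   |U - V|^2 = 2 sum_i (1 - s_i d_i) with d_i = (Q^T P)_ii <= 1. *)
Lemma sinsq_sum_le : Num.sqrt (sinsq_sum s) <= Num.sqrt 2 * fnm (U - V).
Proof.
rewrite -sqrtrM // ler_sqrt ?mulr_ge0 ?fip_ge0 //.
set d := fun i => (Q^T *m P) i i.
have d_le1 i : d i <= 1 by apply: diag_le1.
have UV : fip U V = \sum_i s 0 i * d i.
  by rewrite fip_tr hsvd -mulmxA mxtrace_mulC -mulmxA tr_diag_mul.
rewrite fipBl !fipBr !frame_fip_self // (fipC V U) UV.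
have -> : r%:R = \sum_(i < r) (1 : R) by rewrite sumr_const card_ord.
have : sinsq_sum s <= \sum_i 4 * (1 - s 0 i * d i).
  apply: ler_sum => i _.
  by have := s_ge0 i; have := svals_le1 i; have := d_le1 i; nra.
by rewrite -mulr_sumr sumrB; lra.
Qed.

Lemma procrustes_orthogonal : (P *m Q^T)^T *m (P *m Q^T) = 1%:M.
Proof. by rewrite trmx_mul trmxK mulmxA -(mulmxA Q) hP mulmx1 (mulmx1C hQ). Qed.

(* Upper bound: |U P Q^T - V|^2 = 2 sum_i (1 - s_i) <= 2 ||sin Theta||^2. *)
Lemma procrustes_le :
  fnm (U *m (P *m Q^T) - V) <= Num.sqrt 2 * Num.sqrt (sinsq_sum s).
Proof.
rewrite -sqrtrM // ler_sqrt; last by rewrite mulr_ge0 // sumr_ge0 // => i _;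
  by have := s_ge0 i; have := svals_le1 i; nra.
have UOV : fip (U *m (P *m Q^T)) V = \sum_i s 0 i.
  rewrite fip_tr trmx_mul -mulmxA hsvd trmx_mul trmxK !mulmxA.
  rewrite -(mulmxA Q P^T P) hP mulmx1 mxtrace_mulC mulmxA hQ mul1mx.
  exact: mxtrace_diag.
rewrite fipBl !fipBr fip_orth // (fipC V) UOV.
rewrite !frame_fip_self ?procrustes_orthogonal //.
have -> : r%:R = \sum_(i < r) (1 : R) by rewrite sumr_const card_ord.
have : \sum_i 2 * (1 - s 0 i) <= \sum_i 2 * (1 - s 0 i ^+ 2).
  apply: ler_sum => i _.
  by have := s_ge0 i; have := svals_le1 i; nra.
by rewrite /sinsq_sum -!mulr_sumr !sumrB; lra.
Qed.

End Procrustes.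

(* The final numerical comparison, with b = ||A0||_2^2 and
   c = (1 - b) / (1 + b): (1 + 2 / c) sqrt 2 <= 4 (1 + 32 sqrt 2 / c^2). *)
Lemma constant_bound (b t x : R) : 0 <= b < 1 -> 0 <= t ->
  (1 - b) / (1 + b) * x <= ((1 - b) / (1 + b) + 2) * (Num.sqrt 2 * t) ->
  x <= 4 * (1 + 32 * Num.sqrt 2 * (1 + b) ^+ 2 / (1 - b) ^+ 2) * t.
Proof.
move=> /andP [b_ge0 b_lt1] t_ge0 hx.
set q := (1 + b) / (1 - b); set w := Num.sqrt 2.
have bpos : 0 < 1 - b by rewrite subr_gt0.
have q_ge1 : 1 <= q by rewrite /q ler_pdivlMr // mul1r; lra.
have cq : (1 - b) / (1 + b) * q = 1.
  by rewrite /q; field; rewrite !gt_eqF //; lra.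
have x_le : x <= (1 + 2 * q) * (w * t).
  have := ler_wpM2r (le_trans ler01 q_ge1) hx.
  by rewrite mulrAC cq mul1r [X in _ <= X]mulrAC mulrDl cq.
have -> : 32 * w * (1 + b) ^+ 2 / (1 - b) ^+ 2 = 32 * w * q ^+ 2.
  by rewrite /q expr_div_n !mulrA.
have w_ge0 : 0 <= w := sqrtr_ge0 2.
have w_le2 : w <= 2.
  by rewrite -ler_sqr ?nnegrE // sqr_sqrtr // expr2; lra.
have wt_ge0 : 0 <= w * t by rewrite mulr_ge0.
have q_le : w * t * q <= w * t * q ^+ 2.
  by rewrite ler_wpM2l // expr2 ler_peMr // (le_trans ler01).
have : 0 <= w * t * q ^+ 2 by rewrite mulr_ge0 ?sqr_ge0.
have : w * t <= 2 * t by rewrite ler_wpM2r.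
lra.
Qed.

End Perturbation.

Section CayleyFrames.
Variable R : realType.

Lemma fnormE m n (X : 'M[R]_(m, n)) : fnorm X = fnm X.
Proof.
by congr Num.sqrt; apply: eq_bigr => i _; apply: eq_bigr => j _; rewrite expr2.
Qed.

Lemma vnormE n (x : 'cV[R]_n) : vnorm x = fnm x.
Proof. by congr Num.sqrt; apply: eq_bigr => i _; rewrite big_ord1 expr2. Qed.

(* |A x| <= ||A||_2 for unit vectors x; the defining set of the supremum
   is bounded by the Frobenius norm of A. *)
Lemma spec_norm_ub k r (A : 'M[R]_(k, r)) (x : 'cV[R]_r) :
  vnorm x = 1 -> vnorm (A *m x) <= spec_norm A.
Proof.
move=> x1; apply: sup_upper_bound; last by exists x.
split; first by exists (vnorm (A *m x)), x.
exists (Num.sqrt (fip A A)) => _ [y /= y1 <-].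
rewrite vnormE ler_sqrt ?fip_ge0 // (le_trans (fip_mulmx_le A y)) //.
by rewrite -(fnm_sqr y) -vnormE y1 expr1n mulr1.
Qed.

Lemma spec_norm_ge0 k r (A : 'M[R]_(k, r)) : 0 <= spec_norm A.
Proof.
rewrite /spec_norm; set S := (X in sup X).
have [->|/set0P [_ [x x1 _]]] := eqVneq S set0; first by rewrite sup0.
exact: le_trans (sqrtr_ge0 _) (spec_norm_ub A x1).
Qed.

Lemma spec_norm_bound k r (A : 'M[R]_(k, r)) (x : 'cV[R]_r) :
  fip (A *m x) (A *m x) <= spec_norm A ^+ 2 * fip x x.
Proof.
have [x0|xn0] := eqVneq (fip x x) 0.
  by rewrite x0 mulr0 (fip_eq0 x0) mulmx0 -(scale0r (0 : 'cV[R]_k)) fipZl mul0r.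
have xpos : 0 < fnm x by rewrite sqrtr_gt0 lt_def xn0 fip_ge0.
set u := (fnm x)^-1 *: x.
have fipZ n (y : 'cV[R]_n) : fip ((fnm x)^-1 *: y) ((fnm x)^-1 *: y)
    = fip y y / fnm x ^+ 2.
  by rewrite fipZl fipZr mulrA -expr2 exprVn mulrC.
have u1 : vnorm u = 1.
  by rewrite vnormE /fnm fipZ -fnm_sqr divff ?sqrtr1 // sqrf_eq0 gt_eqF.
have Au_le : fip (A *m u) (A *m u) <= spec_norm A ^+ 2.
  rewrite -fnm_sqr -vnormE ler_sqr ?nnegrE ?sqrtr_ge0 ?spec_norm_ge0 //.
  exact: spec_norm_ub.
move: Au_le; rewrite /u -scalemxAr fipZ ler_pdivrMr ?exprn_gt0 //.
by rewrite fnm_sqr.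
Qed.

Lemma Xphi_skew r k (A : 'M[R]_(k, r)) : (Xphi A)^T = - Xphi A.
Proof.
by rewrite /Xphi tr_block_mx opp_block_mx !trmx0 !oppr0 opprK linearN /= trmxK.
Qed.

(* U(A) is the first r columns of the orthogonal Cayley transform. *)
Lemma Ucay_frame r k (A : 'M[R]_(k, r)) : (Ucay A)^T *m Ucay A = 1%:M.
Proof.
rewrite /Ucay trmx_mul mulmxA -(mulmxA _ _^T) (cayley_orthogonal (Xphi_skew A)).
by rewrite mulmx1 /Ipr tr_col_mx mul_row_col mulmx0 addr0 trmx1 mulmx1.
Qed.

(* Writing U(A) = [T; B], the equation (I - X) U = (I + X) I_{p x r} reads
   T + A^T B = I and B = A (I + T), hence (I + A^T A) T = I - A^T A. *)
Lemma Ucay_top r k (A : 'M[R]_(k, r)) :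
  (1%:M + A^T *m A) *m usubmx (Ucay A) = 1%:M - A^T *m A.
Proof.
have eqU : (1%:M - Xphi A) *m Ucay A = (1%:M + Xphi A) *m Ipr R r k.
  rewrite /Ucay !mulmxA cayley_factors_commute -(mulmxA (1%:M + _)).
  by rewrite mulmxV ?mulmx1 // skew_unitmx // Xphi_skew.
have eB : 1%:M - Xphi A = block_mx 1%:M A^T (- A) 1%:M.
  by rewrite /Xphi (scalar_mx_block r k 1) opp_block_mx add_block_mx
    !subr0 !sub0r opprK.
have eI : (1%:M + Xphi A) *m Ipr R r k = col_mx 1%:M A.
  rewrite /Xphi (scalar_mx_block r k 1) add_block_mx !addr0 !add0r /Ipr.
  by rewrite mul_block_col !mulmx0 !mulmx1 !addr0.
set T := usubmx (Ucay A); set B := dsubmx (Ucay A).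
move: eqU; rewrite eB eI -(vsubmxK (Ucay A)) -/T -/B mul_block_col !mul1mx.
case/eq_col_mx => eT eB'.
have eBv : B = A + A *m T by rewrite -{1}eB' mulNmx addrAC addNr add0r.
by rewrite mulmxDl mul1mx -eT eBv mulmxDr mulmxA addrA addrAC addrK.
Qed.

Lemma Ucay_top_sym r k (A : 'M[R]_(k, r)) :
  (usubmx (Ucay A))^T = usubmx (Ucay A).
Proof. by apply: cayley_sym (Ucay_top A); rewrite trmx_mul trmxK. Qed.

Lemma Ucay_top_lb r k p (A : 'M[R]_(k, r)) (X : 'M[R]_(r, p)) :
  (1 - spec_norm A ^+ 2) / (1 + spec_norm A ^+ 2) * fip X X
    <= fip X (usubmx (Ucay A) *m X).
Proof.
have den_pos : 0 < 1 + spec_norm A ^+ 2 by rewrite ltr_pwDl ?sqr_ge0.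
rewrite mulrAC ler_pdivrMr // [X in _ <= X]mulrC.
apply: cayley_block_lb (spec_norm_ge0 A) _ (Ucay_top A) X.
exact/op_bound_mx/spec_norm_bound.
Qed.

(* With cosines s_i in [0, 1], sin (acos s_i)^2 = 1 - s_i^2. *)
Lemma sinThetaF_E n (s : 'rV[R]_n) : (forall i, 0 <= s 0 i <= 1) ->
  sinThetaF s = Num.sqrt (sinsq_sum s).
Proof.
move=> s01; congr Num.sqrt; apply: eq_bigr => i _.
have /andP [s_ge0 s_le1] := s01 i.
by rewrite sin2cos2 acosK // in_itv /= s_le1 (le_trans _ s_ge0) // lerN10.
Qed.

End CayleyFrames.

Unset Implicit Arguments.
Set Strict Implicit.

Theorem theorem5 (R : realType) (r k : nat) (hr : (1 <= r)%N)
  (A A0 : 'M[R]_(k, r)) (s : 'rV[R]_r) :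
  spec_norm A < 1 -> spec_norm A0 < 1 ->
  is_svals ((Ucay A)^T *m Ucay A0) s ->
  (sinThetaF s <= (1 - spec_norm A0 ^+ 2) ^+ 2 / (8 * (1 + spec_norm A0 ^+ 2) ^+ 2) ->
   fnorm (Ucay A - Ucay A0) <=
     4 * (1 + 32 * Num.sqrt 2 * (1 + spec_norm A0 ^+ 2) ^+ 2
                 / (1 - spec_norm A0 ^+ 2) ^+ 2) * sinThetaF s)
  /\ sinThetaF s <= Num.sqrt 2 * fnorm (Ucay A - Ucay A0).
Proof.
move=> hA hA0 [s_ge0 [_ [P [Q [hP [hQ hsvd]]]]]].
have hU := Ucay_frame A; have hV := Ucay_frame A0.
have s01 i : 0 <= s 0 i <= 1.
  by rewrite s_ge0 (svals_le1 hU hV hP hQ hsvd).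
rewrite (sinThetaF_E s01) fnormE; split; last exact: sinsq_sum_le hsvd.
move=> _; set b := spec_norm A0 ^+ 2.
have b01 : 0 <= b < 1 by rewrite sqr_ge0 expr_lt1 ?spec_norm_ge0.
have c_ge0 : 0 <= (1 - b) / (1 + b).
  by rewrite divr_ge0 //; move: b01 => /andP [? ?]; lra.
have TU_ge0 (X : 'M[R]_r) : 0 <= fip X (usubmx (Ucay A) *m X).
  have a2 : 0 <= spec_norm A ^+ 2 < 1 by rewrite sqr_ge0 expr_lt1 ?spec_norm_ge0.
  apply: le_trans (Ucay_top_lb A X); rewrite mulr_ge0 ?fip_ge0 // divr_ge0 //;
    by move: a2 => /andP [? ?]; lra.
apply: constant_bound b01 (sqrtr_ge0 _) _.
apply: le_trans (frame_dist_le c_ge0 hU (procrustes_orthogonal hP hQ)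
  (Ucay_top_sym A) (Ucay_top_sym A0) TU_ge0 (Ucay_top_lb A0)) _.
rewrite ler_wpM2l ?addr_ge0 //.
exact: procrustes_le hsvd.
Qed.
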